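(* Let $I$ be an instance of SPA-S and let $\mathcal{M}$ be the set of all stable matchings of $I$. The student-oriented dominance relation $\preceq$ is a partial order (reflexive, anti-symmetric and transitive) on $\mathcal{M}$.
   Context: An instance $I$ of SPA-S consists of a finite set $\mathcal{S}$ of students, a finite set $\mathcal{P}$ of projects and a finite set $\mathcal{L}$ of lecturers. Each student $s_i$ ranks a subset $A_i\subseteq\mathcal{P}$ (its acceptable projects) in strict order. Each project is offered by exactly one lecturer; lecturer $l_k$ offers a nonempty set $P_k\subseteq\mathcal{P}$, the $P_k$ partitioning $\mathcal{P}$. Each lecturer $l_k$ ranks in strict order the students who find at least one project of $P_k$ acceptable. Projects have capacities $c_j\in\mathbb{Z}^+$, lecturers have capacities $d_k\in\mathbb{Z}^+$ with $\max\{c_j:p_j\in P_k\}\le d_k\le\sum\{c_j:p_j\in P_k\}$. A pair $(s_i,p_j)$, $p_j$ offered by $l_k$, is acceptable if $p_j\in A_i$ and $s_i$ is on $l_k$'s list. A matching $M$ is a set of acceptable pairs with each student in at most one pair, $|M(p_j)|\le c_j$, $|M(l_k)|\le d_k$, where $M(s_i)$, $M(p_j)$, $M(l_k)$ denote the project of $s_i$, the students assigned to $p_j$, and the students assigned to projects of $l_k$. Undersubscribed/full means fewer than/exactly capacity many assigned students. An acceptable pair $(s_i,p_j)\notin M$ ($p_j$ offered by $l_k$) blocks $M$ if ($s_i$ is unassigned or prefers $p_j$ to $M(s_i)$) and one of: (P1) $p_j$ and $l_k$ undersubscribed; (P2) $p_j$ undersubscribed, $l_k$ full, $s_i\in M(l_k)$;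 (P3) $p_j$ undersubscribed, $l_k$ full, $l_k$ prefers $s_i$ to the worst student of $M(l_k)$; (P4) $p_j$ full and $l_k$ prefers $s_i$ to the worst student of $M(p_j)$. $M$ is stable if it has no blocking pair. A student prefers $M$ to $M'$ if assigned in both and prefers $M(s_i)$ to $M'(s_i)$; is indifferent if unassigned in both or $M(s_i)=M'(s_i)$. $M\preceq M'$ iff every student prefers $M$ to $M'$ or is indifferent. It is known that exactly the same students are unassigned in all stable matchings of $I$. *)

From mathcomp Require Import all_boot.
Set Implicit Arguments. Unset Strict Implicit. Unset Printing Implicit Defensive.

Definition strict_order_on (T : finType) (r : rel T) (A : {set T}) : Prop :=
  [/\ (forall x y, r x y -> (x \in A) && (y \in A)),
      (forall x, ~~ r x x),
      (forall x y z, r x y -> r y z -> r x z) &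
      (forall x y, x \in A -> y \in A -> x != y -> r x y || r y x)].

Record SPAS (S P L : finType) := {
  acc : S -> {set P};
  prefS : S -> rel P;               (* prefS s p q : s prefers p to q *)
  lect : P -> L;
  prefL : L -> rel S;               (* prefL l s t : l prefers s to t *)
  pcap : P -> nat;
  lcap : L -> nat;
  prefS_ok : forall s, strict_order_on (prefS s) (acc s);
  prefL_ok : forall l, strict_order_on (prefL l)
                 [set s | [exists p, (lect p == l) && (p \in acc s)]];
  offers_nonempty : forall l, exists p, lect p = l;
  pcap_pos : forall p, 0 < pcap p;
  lcap_ge : forall l p, lect p = l -> pcap p <= lcap l;
  lcap_le : forall l, lcap l <= \sum_(p | lect p == l) pcap p
}.

Section Defs.
Variables (S P L : finType) (I : SPAS S P L).

Definition lect_list (l : L) : {set S} :=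
  [set s | [exists p, (lect I p == l) && (p \in acc I s)]].

Definition acceptable (s : S) (p : P) : bool :=
  (p \in acc I s) && (s \in lect_list (lect I p)).

Definition Mp (M : {set S * P}) (p : P) : {set S} := [set s | (s, p) \in M].
Definition Ml (M : {set S * P}) (l : L) : {set S} :=
  [set s | [exists p, ((s, p) \in M) && (lect I p == l)]].

Definition matching (M : {set S * P}) : Prop :=
  [/\ (forall s p, (s, p) \in M -> acceptable s p),
      (forall s p q, (s, p) \in M -> (s, q) \in M -> p = q),
      (forall p, #|Mp M p| <= pcap I p) &
      (forall l, #|Ml M l| <= lcap I l)].

Definition assigned (M : {set S * P}) (s : S) : Prop := exists p, (s, p) \in M.

Definition worst (l : L) (X : {set S}) (w : S) : Prop :=
  w \in X /\ forall t, t \in X -> t != w -> prefL I l t w.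

Definition blocking (M : {set S * P}) (s : S) (p : P) : Prop :=
  let l := lect I p in
  [/\ acceptable s p, (s, p) \notin M,
      (~ assigned M s \/ exists q, (s, q) \in M /\ prefS I s p q) &
      [\/ (#|Mp M p| < pcap I p /\ #|Ml M l| < lcap I l),
          [/\ #|Mp M p| < pcap I p, #|Ml M l| = lcap I l & s \in Ml M l],
          [/\ #|Mp M p| < pcap I p, #|Ml M l| = lcap I l &
              exists w, worst l (Ml M l) w /\ prefL I l s w]
        | #|Mp M p| = pcap I p /\
              exists w, worst l (Mp M p) w /\ prefL I l s w ]].

Definition stable (M : {set S * P}) : Prop :=
  matching M /\ forall s p, ~ blocking M s p.

Definition student_prefers (M M' : {set S * P}) (s : S) : Prop :=
  exists p p', [/\ (s, p) \in M, (s, p') \in M' & prefS I s p p'].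

Definition student_indifferent (M M' : {set S * P}) (s : S) : Prop :=
  (~ assigned M s /\ ~ assigned M' s) \/
  (exists p, (s, p) \in M /\ (s, p) \in M').

Definition dominates (M M' : {set S * P}) : Prop :=
  forall s, student_prefers M M' s \/ student_indifferent M M' s.

End Defs.

From mathcomp Require Import all_boot.

Set Implicit Arguments.
Unset Strict Implicit.
Unset Printing Implicit Defensive.

Section Dominance.
Variables (S P L : finType) (I : SPAS S P L).
Implicit Types (M : {set S * P}) (s : S) (p q r : P).

Definition single_valued M :=
  forall s p q, (s, p) \in M -> (s, q) \in M -> p = q.

Lemma stable_single_valued M : stable I M -> single_valued M.
Proof. by case=> -[]. Qed.

Lemma prefS_irr s p : ~ prefS I s p p.
Proof. by case: (prefS_ok I s) => _ irr _ _; apply/negP. Qed.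

Lemma prefS_trans s p q r : prefS I s p q -> prefS I s q r -> prefS I s p r.
Proof. by case: (prefS_ok I s) => _ _ trans _; apply: trans. Qed.

Lemma student_indifferent_refl M s : student_indifferent M M s.
Proof.
case: (boolP [exists p, (s, p) \in M]) => [/existsP [p sp]|/existsP none].
  by right; exists p.
by left; split=> -[p sp]; apply: none; exists p.
Qed.

Lemma student_indifferent_sym M M' s :
  student_indifferent M M' s -> student_indifferent M' M s.
Proof. by case=> [[? ?]|[p [? ?]]]; [left | right; exists p]. Qed.

Lemma student_indifferent_mem M M' s p :
  single_valued M -> student_indifferent M M' s ->
  (s, p) \in M -> (s, p) \in M'.
Proof.
move=> svM [[unassigned _] sp|[q [sq sq']] sp]; first by case: unassigned; exists p.
by rewrite (svM _ _ _ sp sq).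
Qed.

Lemma student_prefers_asym M M' s :
  single_valued M -> single_valued M' ->
  student_prefers I M M' s -> ~ student_prefers I M' M s.
Proof.
move=> svM svM' [p [p' [sp sp' pp']]] [q' [q [sq' sq qq]]].
rewrite (svM _ _ _ sq sp) (svM' _ _ _ sq' sp') in qq.
exact: prefS_irr (prefS_trans pp' qq).
Qed.

Lemma student_prefers_not_indifferent M M' s :
  single_valued M -> single_valued M' ->
  student_prefers I M M' s -> ~ student_indifferent M M' s.
Proof.
move=> svM svM' [p [p' [sp sp' pp']]] [[unassigned _]|[q [sq sq']]].
  by case: unassigned; exists p.
rewrite -(svM _ _ _ sq sp) -(svM' _ _ _ sq' sp') in pp'.
exact: prefS_irr pp'.
Qed.

Section Transitivity.
Variables (M M' M'' : {set S * P}) (s : S).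
Hypothesis svM' : single_valued M'.

Lemma student_prefers_trans :
  student_prefers I M M' s -> student_prefers I M' M'' s ->
  student_prefers I M M'' s.
Proof.
move=> [p [p' [sp sp' pp']]] [q' [q'' [sq' sq'' qq']]].
rewrite (svM' sq' sp') in qq'.
by exists p, q''; split=> //; apply: prefS_trans qq'.
Qed.

Lemma student_prefers_indifferent_trans :
  student_prefers I M M' s -> student_indifferent M' M'' s ->
  student_prefers I M M'' s.
Proof.
move=> [p [p' [sp sp' pp']]] ind.
by exists p, p'; split=> //; apply: student_indifferent_mem ind sp'.
Qed.

Lemma student_indifferent_prefers_trans :
  student_indifferent M M' s -> student_prefers I M' M'' s ->
  student_prefers I M M'' s.
Proof.
move=> ind [q' [q'' [sq' sq'' qq']]].
exists q', q''; split=> //.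
by apply: student_indifferent_mem sq'; last exact: student_indifferent_sym.
Qed.

Lemma student_indifferent_trans :
  student_indifferent M M' s -> student_indifferent M' M'' s ->
  student_indifferent M M'' s.
Proof.
case=> [[unM unM']|[p [sp sp']]] [[unM'' unM''']|[q [sq' sq'']]].
- by left.
- by case: unM'; exists q.
- by case: unM''; exists p.
- by right; exists p; split; rewrite // (svM' sp' sq').
Qed.

End Transitivity.

Lemma dominates_refl M : dominates I M M.
Proof. by move=> s; right; apply: student_indifferent_refl. Qed.

Lemma dominates_subset M M' :
  single_valued M -> single_valued M' ->
  dominates I M M' -> dominates I M' M -> M \subset M'.
Proof.
move=> svM svM' D D'; apply/subsetP => -[s p] sp.
have ind : student_indifferent M M' s.
  case: (D s) => // pref; case: (D' s) => [pref'|ind'].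
    by case: (student_prefers_asym svM svM' pref pref').
  by case: (student_prefers_not_indifferent svM svM' pref);
    apply: student_indifferent_sym.
exact: student_indifferent_mem ind sp.
Qed.

Lemma dominates_anti M M' :
  single_valued M -> single_valued M' ->
  dominates I M M' -> dominates I M' M -> M = M'.
Proof.
move=> svM svM' D D'; apply/eqP; rewrite eqEsubset.
by rewrite !dominates_subset.
Qed.

Lemma dominates_trans M M' M'' :
  single_valued M' -> dominates I M M' -> dominates I M' M'' ->
  dominates I M M''.
Proof.
move=> svM' D D' s.
case: (D s) => [pref|ind]; case: (D' s) => [pref'|ind'].
- by left; apply: student_prefers_trans pref pref'.
- by left; apply: student_prefers_indifferent_trans ind'.
- by left; apply: student_indifferent_prefers_trans ind pref'.
- by right; apply: student_indifferent_trans ind ind'.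
Qed.

End Dominance.

Theorem proposition1 (S P L : finType) (I : SPAS S P L) :
  [/\ (forall M, stable I M -> dominates I M M),
      (forall M M', stable I M -> stable I M' ->
         dominates I M M' -> dominates I M' M -> M = M') &
      (forall M M' M'', stable I M -> stable I M' -> stable I M'' ->
         dominates I M M' -> dominates I M' M'' -> dominates I M M'')].
Proof.
split=> [M _ | M M' stM stM' | M M' M'' _ stM' _].
- exact: dominates_refl.
- exact: dominates_anti (stable_single_valued stM) (stable_single_valued stM').
- exact: dominates_trans (stable_single_valued stM').
Qed.
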